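(* Let $(\pi_r)_{r\in\mathbb{N}}$ be periods and let $(k_t)_{t\in\mathbb{N}}$ be the multiperiodic sequence with periods $(\pi_r)$ and seeds $\sigma_r=1$ for all $r\in\mathbb{N}$. Let $w_r:=\inf\{t\in\mathbb{N}: k_t=r\}$. If $r\in\mathbb{N}$ is such that $\pi_i\ge 2$ for all $1\le i\le r-1$, then $$w_r=\left\lceil\cdots\left\lceil\left\lceil\frac{\pi_{r-1}}{\pi_{r-1}-1}\right\rceil\frac{\pi_{r-2}}{\pi_{r-2}-1}\right\rceil\cdots\frac{\pi_1}{\pi_1-1}\right\rceil,$$ i.e. $w_r=u_1$ where $u_r:=1$ and $u_{i}:=\lceil u_{i+1}\,\pi_{i}/(\pi_{i}-1)\rceil$ for $i=r-1,r-2,\dots,1$ (so $w_1=1$).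
   Context: $\mathbb{N}=\{1,2,3,\dots\}$. Multiperiodic sequence: given periods $\pi_r\in\mathbb{N}$ and seeds $\sigma_r\in\{1,\dots,\pi_r\}$, the sequence $(k_t)_{t\in\mathbb{N}}$ with values in $\mathbb{N}\cup\{\infty\}$ is defined by requiring, for each $r$, that the subsequence $(k^{(r)}_t)_{t\in\mathbb{N}}$ obtained by deleting all tokens $k_t<r$ satisfies $k^{(r)}_t=r\iff t\equiv\sigma_r\pmod{\pi_r}$; entries left undefined for all $r$ are set to $\infty$. Equivalently: clocks $\phi_r$ start at $\sigma_r$; for each token, scan $r=1,2,\dots$, decrementing each clock with $\phi_r>1$, until the first $r$ with $\phi_r=1$, output $k_t=r$ and reset $\phi_r=\pi_r$. *)

From mathcomp Require Import all_boot.
Set Implicit Arguments. Unset Strict Implicit. Unset Printing Implicit Defensive.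

(* Multiperiodic sequence, following the "subsequence" definition.
   Indices t, positions j and levels r are 1-based naturals.
   [hit pi sigma r j] : the j-th token of the level-r subsequence
   (tokens with k_t >= r) has value r, i.e. j = sigma_r (mod pi_r). *)
Definition hit (pi sigma : nat -> nat) (r j : nat) : bool :=
  j %% pi r == sigma r %% pi r.

(* [lvl pi sigma n t] = Some j iff token t survives into the level-(n+1)
   subsequence (i.e. k_t >= n+1) and is its j-th entry (1-based);
   None if it was deleted (k_t < n+1). *)
Fixpoint lvl (pi sigma : nat -> nat) (n t : nat) : option nat :=
  match n with
  | 0 => Some t
  | n'.+1 =>
      match lvl pi sigma n' t with
      | None => None
      | Some j =>
          if hit pi sigma n'.+1 j then None
          else Some (j - count (hit pi sigma n'.+1) (iota 1 j))
      end
  end.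

(* [kval pi sigma t r] : k_t = r  (for t, r >= 1). *)
Definition kval (pi sigma : nat -> nat) (t r : nat) : bool :=
  (0 < r) &&
  match lvl pi sigma r.-1 t with
  | Some j => hit pi sigma r j
  | None => false
  end.

Definition ceildiv (a b : nat) : nat := (a + b.-1) %/ b.

(* [uu pi r d] = u_{r-d}, where u_r = 1 and
   u_i = ceil (u_{i+1} * pi_i / (pi_i - 1)). *)
Fixpoint uu (pi : nat -> nat) (r d : nat) : nat :=
  match d with
  | 0 => 1
  | d'.+1 => let i := r - d'.+1 in ceildiv (uu pi r d' * pi i) (pi i - 1)
  end.

From mathcomp Require Import all_boot zify.

Set Implicit Arguments.
Unset Strict Implicit.
Unset Printing Implicit Defensive.

(* With seed 1 and period p, a level deletes the positions j = 1 (mod p), i.e.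
   ceil(j/p) of the first j tokens, so the j-th token, if it survives, becomes
   entry j - ceil(j/p) = floor(j(p-1)/p) of the next level.  This rank map has
   the lower adjoint m |-> ceil(mp/(p-1)):  ceil(mp/(p-1)) <= j  iff
   m <= floor(j(p-1)/p).  Hence ceil(mp/(p-1)) is the position of the m-th
   survivor and inverts the rank map on survivors.  Composing these inverses
   over the levels 1, ..., r-1 sends entry 1 of the level-r subsequence to the
   position u_1, and every later entry to a position at least u_1. *)

Definition hit1 (p j : nat) : bool := j %% p == 1 %% p.

Definition survivor_rank (p j : nat) : nat := j - count (hit1 p) (iota 1 j).

Definition survivor_pos (p m : nat) : nat := ceildiv (m * p) (p - 1).

Lemma leq_ceildiv a b n : 0 < b -> (ceildiv a b <= n) = (a <= n * b).
Proof.
move=> b_gt0; rewrite /ceildiv -ltnS ltn_divLR //; lia.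
Qed.

Lemma hit1S p j : hit1 p j.+1 = (p %| j).
Proof. by rewrite /hit1 -addn1 -{2}[1]add0n eqn_modDr /dvdn mod0n. Qed.

Lemma count_hit1_iota p j : 0 < p -> count (hit1 p) (iota 1 j) = ceildiv j p.
Proof.
move=> p_gt0; elim: j => [|j IHj]; first by rewrite /ceildiv divn_small ?prednK.
rewrite -[j.+1]addn1 iotaD count_cat IHj add1n /= hit1S addn0 addn1 /ceildiv addSn divnS //.
by rewrite addnC -addnS prednK // dvdn_addl.
Qed.

Lemma survivor_rankS p j :
  survivor_rank p j.+1 = survivor_rank p j + ~~ hit1 p j.+1.
Proof.
rewrite /survivor_rank -[j.+1]addn1 iotaD count_cat add1n /= addn0.
have := count_size (hit1 p) (iota 1 j); rewrite size_iota.
by rewrite addn1; case: (hit1 p _) => /=; lia.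
Qed.

Lemma survivor_pos0 p : survivor_pos p 0 = 0.
Proof. by rewrite /survivor_pos /ceildiv; case: (p - 1) => // q; rewrite divn_small. Qed.

Section OneLevel.

Variable p : nat.
Hypothesis p_gt1 : 1 < p.

Lemma leq_survivor_pos m j : (survivor_pos p m <= j) = (m <= survivor_rank p j).
Proof.
have p_gt0 := ltnW p_gt1.
rewrite /survivor_rank count_hit1_iota // leq_ceildiv ?subn_gt0 //.
have ceil_le : ceildiv j p <= j by rewrite leq_ceildiv // leq_pmulr.
have := leq_ceildiv j (j - m) p_gt0; nia.
Qed.

Lemma survivor_pos_gt0 m : (0 < survivor_pos p m) = (0 < m).
Proof. by rewrite !ltnNge leq_survivor_pos. Qed.

Lemma leq_survivor_pos2 m1 m2 : m1 <= m2 -> survivor_pos p m1 <= survivor_pos p m2.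
Proof. by move=> le_m; rewrite leq_survivor_pos (leq_trans le_m) // -leq_survivor_pos. Qed.

Lemma survivor_posK m :
  0 < m -> ~~ hit1 p (survivor_pos p m) /\ survivor_rank p (survivor_pos p m) = m.
Proof.
move=> m_gt0; have := leqnn (survivor_pos p m); rewrite leq_survivor_pos.
case def_j: (survivor_pos p m) => [|j]; first by rewrite leqn0 => /eqP m0; rewrite m0 in m_gt0.
have rank_lt : survivor_rank p j < m by rewrite ltnNge -leq_survivor_pos def_j ltnn.
by rewrite survivor_rankS; case: (hit1 p j.+1) rank_lt => /=; lia.
Qed.

Lemma survivor_rankK j : ~~ hit1 p j -> survivor_pos p (survivor_rank p j) = j.
Proof.
case: j => [|j] no_hit; first exact: survivor_pos0.
apply/eqP; rewrite eqn_leq leq_survivor_pos leqnn /=.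
by rewrite ltnNge leq_survivor_pos survivor_rankS no_hit addn1 ltnn.
Qed.

End OneLevel.

(* Position in (k_t) of the j-th entry of the subsequence of tokens >= n+1. *)
Fixpoint token_pos (pi : nat -> nat) (n j : nat) : nat :=
  if n is n'.+1 then token_pos pi n' (survivor_pos (pi n) j) else j.

Lemma lvlS pi n t :
  lvl pi (fun=> 1) n.+1 t =
  if lvl pi (fun=> 1) n t is Some j then
    if hit1 (pi n.+1) j then None else Some (survivor_rank (pi n.+1) j)
  else None.
Proof. by []. Qed.

Lemma token_pos0 pi n : token_pos pi n 0 = 0.
Proof. by elim: n => //= n; rewrite survivor_pos0. Qed.

Section Levels.

Variable pi : nat -> nat.

Definition periods_gt1 (n : nat) : Prop := forall i, 1 <= i <= n -> 1 < pi i.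

Lemma periods_gt1S n : periods_gt1 n.+1 -> periods_gt1 n /\ 1 < pi n.+1.
Proof.
move=> pi_gt1; split; last by apply: pi_gt1; rewrite leqnn.
by move=> i /andP[i_ge1 i_le]; apply: pi_gt1; rewrite i_ge1 ltnW.
Qed.

Lemma leq_token_pos2 n m1 m2 :
  periods_gt1 n -> m1 <= m2 -> token_pos pi n m1 <= token_pos pi n m2.
Proof.
elim: n m1 m2 => [|n IHn] m1 m2 //= /periods_gt1S[periods_n p_gt1] le_m.
exact: IHn _ _ periods_n (leq_survivor_pos2 p_gt1 le_m).
Qed.

Lemma lvl_token_pos n j :
  periods_gt1 n -> 0 < j -> lvl pi (fun=> 1) n (token_pos pi n j) = Some j.
Proof.
elim: n j => [|n IHn] j // /periods_gt1S[periods_n p_gt1] j_gt0.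
have [no_hit rankK] := survivor_posK p_gt1 j_gt0.
by rewrite lvlS IHn ?survivor_pos_gt0 // (negbTE no_hit) rankK.
Qed.

Lemma token_pos_lvl n t j :
  periods_gt1 n -> lvl pi (fun=> 1) n t = Some j -> token_pos pi n j = t.
Proof.
elim: n t j => [|n IHn] t j; first by move=> _ [].
move=> /periods_gt1S[periods_n p_gt1]; rewrite lvlS.
case def_j': (lvl _ _ n t) => [j'|] //; case: ifPn => // no_hit [<-] /=.
by rewrite survivor_rankK //; apply: IHn def_j'.
Qed.

Lemma token_pos_uu r n :
  n <= r.-1 -> token_pos pi n (uu pi r (r.-1 - n)) = uu pi r r.-1.
Proof.
elim: n => [|n IHn] le_n; first by rewrite subn0.
rewrite -IHn ?(ltnW le_n) // (_ : r.-1 - n = (r.-1 - n.+1).+1) /=; last lia.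
by rewrite (_ : r - (r.-1 - n.+1).+1 = n.+1) //; lia.
Qed.

End Levels.

Theorem theorem2 (pi : nat -> nat) (r : nat)
  (hpi : forall i, 0 < pi i) (hr : 0 < r)
  (h2 : forall i, 1 <= i <= r.-1 -> 2 <= pi i) :
  kval pi (fun _ => 1) (uu pi r r.-1) r /\
  (forall t, 0 < t -> kval pi (fun _ => 1) t r -> uu pi r r.-1 <= t).
Proof.
have -> : uu pi r r.-1 = token_pos pi r.-1 1.
  by rewrite -(token_pos_uu pi (leqnn r.-1)) subnn.
split; first by rewrite /kval hr lvl_token_pos // /hit eqxx.
move=> t t_gt0 /andP[_]; case def_j: (lvl _ _ _ t) => [j|] // _.
have pos_j := token_pos_lvl h2 def_j.
have j_gt0 : 0 < j.
  by move: t_gt0; rewrite -pos_j; case: j {def_j pos_j} => //; rewrite token_pos0.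
by rewrite -pos_j leq_token_pos2.
Qed.
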